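(* If a connected graph $G$ has $n\ge 2$ vertices and $k$ blocks, then the graphic TSP cost of $G$ is at least $n+k-1$.
   Context: A block of a graph is a maximal biconnected subgraph (a bridge forms a trivial block). For a connected unweighted undirected graph $G=(V,E)$ with $n\ge 2$ vertices, the graphic TSP cost of $G$ is $\min \sum_{i=1}^{n} d_G(v_i,v_{i+1})$ over all cyclic orderings $(v_1,\dots,v_n)$ of $V$, with $v_{n+1}=v_1$, where $d_G$ is the shortest-path distance in $G$. *)

(* A simple graph is a symmetric irreflexive relation e on a finType T. *)
From mathcomp Require Import all_boot.
Set Implicit Arguments. Unset Strict Implicit. Unset Printing Implicit Defensive.

Section Graph.
Variables (T : finType) (e : rel T).

Definition restr (S : {set T}) : rel T := fun x y => [&& x \in S, y \in S & e x y].

Definition connected_in (S : {set T}) : bool :=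
  [forall x in S, forall y in S, connect (restr S) x y].

(* G[B] is biconnected: at least 2 vertices, connected, and no cut vertex
   (so a single edge K2 counts as biconnected). *)
Definition biconnected (B : {set T}) : bool :=
  [&& 1 < #|B|, connected_in B & [forall v in B, connected_in (B :\ v)]].

Definition is_block (B : {set T}) : bool :=
  biconnected B && [forall B' : {set T}, (B \proper B') ==> ~~ biconnected B'].

Definition nblocks : nat := #|[set B : {set T} | is_block B]|.

(* shortest-path distance: the least m such that a walk with m edges joins u to v
   (returns #|T| if no such m < #|T| exists, which never happens in a connected graph) *)
Definition dist (u v : T) : nat :=
  find (fun m => [exists p : m.-tuple T, path e u p && (last u p == v)]) (iota 0 #|T|).

Definition tour_cost (s : seq T) : nat :=
  \sum_(p <- zip s (rot 1 s)) dist p.1 p.2.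

(* graphic TSP cost: minimum over all cyclic orderings of V
   (the default value enum T is itself a cyclic ordering, so this is the true minimum) *)
Definition tsp_cost : nat :=
  \big[minn/tour_cost (enum T)]_(t : #|T|.-tuple T | uniq t) tour_cost t.

End Graph.

(* Call incidence a pair (B, v) of a block B and a vertex v of B.  The proof
   compares the number of incidences with two quantities.
   - Lower bound: fix a root x and let h be the distance from x.  Every
     block B has an incidence (B, v) with v lowest in B, and every vertex
     v != x has an incidence (B, v) with v not lowest in B: take a block B
     containing the edge from a lower neighbour of v.  Hence
     #incidences >= k + (n - 1).
   - Upper bound: replacing each step of a tour by a shortest walk gives a
     closed walk through all vertices whose length is the cost of the tour.
     Such a walk enters every vertex v of a block B from inside B, since a
     detour leaving B and coming back elsewhere would be an ear of B, and a
     block has no ears (attaching one would give a larger biconnected set).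
     An arc (u, v) lies in a single block, so #incidences <= #arcs. *)
From mathcomp Require Import all_boot.
Set Implicit Arguments. Unset Strict Implicit. Unset Printing Implicit Defensive.

Section Sequences.
Variable A : eqType.
Implicit Types (P : pred A) (x y : A) (s p q r : seq A).

Definition arcs s : seq (A * A) := zip s (rot 1 s).

Definition steps y p : seq (A * A) := zip (belast y p) p.

Lemma size_arcs s : size (arcs s) = size s.
Proof. by rewrite /arcs size_zip size_rot minnn. Qed.

Lemma arcs_cons x s : arcs (x :: s) = steps x (rcons s x).
Proof. by rewrite /arcs rot1_cons /steps belast_rcons. Qed.

Lemma steps_cons y a p : steps y (a :: p) = (y, a) :: steps a p.
Proof. by []. Qed.

Lemma steps_cat y p1 p2 : steps y (p1 ++ p2) = steps y p1 ++ steps (last y p1) p2.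
Proof. by rewrite /steps belast_cat zip_cat ?size_belast. Qed.

Lemma zip_rot (C : Type) k s (t : seq C) :
  size s = size t -> zip (rot k s) (rot k t) = rot k (zip s t).
Proof.
move=> st; have zip_take : zip (take k s) (take k t) = take k (zip s t).
  by elim: s t k st => [|x s IH] [|b t] [|k] //= [st]; rewrite IH.
have zip_drop : zip (drop k s) (drop k t) = drop k (zip s t).
  by elim: s t k st {zip_take} => [|x s IH] [|b t] [|k] //= [st]; rewrite IH.
by rewrite /rot zip_cat ?size_drop ?st // zip_drop zip_take.
Qed.

Lemma arcs_rot k s : arcs (rot k s) = rot k (arcs s).
Proof. by rewrite /arcs rot_rot zip_rot ?size_rot. Qed.

Lemma split_first P s : has P s ->
  exists q x r, [/\ s = q ++ x :: r, P x & all (predC P) q].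
Proof.
elim: s => [//|a s IH] /= /orP[Pa|hasP_s]; first by exists [::], a, s.
have [Pa|nPa] := boolP (P a); first by exists [::], a, s.
have [q [x [r [-> Px qP]]]] := IH hasP_s.
by exists (a :: q), x, r; rewrite /= nPa.
Qed.

Lemma split_last P s : has P s ->
  exists q x r, [/\ s = q ++ x :: r, P x & all (predC P) r].
Proof.
elim: s => [//|a s IH] /= hasP_as; have [hasP_s|nhasP_s] := boolP (has P s).
  by have [q [x [r [-> Px rP]]]] := IH hasP_s; exists (a :: q), x, r.
exists [::], a, s; split=> //; last by rewrite all_predC.
by move: hasP_as; rewrite (negbTE nhasP_s) orbF.
Qed.

End Sequences.

Section InducedConnectivity.
Variables (T : finType) (e : rel T).
Hypothesis e_sym : symmetric e.
Implicit Types (S A : {set T}) (x y r s : T) (p q t : seq T).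

Lemma restr_sym S : symmetric (restr e S).
Proof. by move=> x y; rewrite /restr e_sym andbCA. Qed.

Lemma connect_restr_sub S S' x y :
  S \subset S' -> connect (restr e S) x y -> connect (restr e S') x y.
Proof.
move=> sSS' /connectP[p pp ->]; apply/connectP; exists p => //; move: pp.
apply: sub_path => a b /and3P[aS bS ab].
by rewrite /restr (subsetP sSS' a aS) (subsetP sSS' b bS).
Qed.

Lemma connected_in_sub S A x y : connected_in e A -> A \subset S ->
  x \in A -> y \in A -> connect (restr e S) x y.
Proof.
move=> /forall_inP cA sAS xA yA; apply: connect_restr_sub sAS _.
by move/forall_inP: (cA x xA); apply.
Qed.

Lemma connected_in_root S r :
  (forall x, x \in S -> connect (restr e S) r x) -> connected_in e S.
Proof.
move=> rS; apply/forall_inP => x xS; apply/forall_inP => y yS.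
apply: connect_trans _ (rS y yS).
by rewrite (sym_connect_sym (restr_sym S)); apply: rS.
Qed.

Lemma connected_inU A A' r : connected_in e A -> connected_in e A' ->
  r \in A -> r \in A' -> connected_in e (A :|: A').
Proof.
move=> cA cA' rA rA'; apply: (connected_in_root (r := r)) => x; rewrite inE.
case/orP=> [xA | xA'].
  exact: connected_in_sub cA (subsetUl A A') rA xA.
exact: connected_in_sub cA' (subsetUr A A') rA' xA'.
Qed.

Lemma complete_connected S :
  (forall x y, x \in S -> y \in S -> x = y \/ e x y) -> connected_in e S.
Proof.
move=> complS; apply/forall_inP => x xS; apply/forall_inP => y yS.
have [-> | exy] := complS x y xS yS; first exact: connect0.
by apply: connect1; rewrite /restr xS yS exy.
Qed.

Lemma path_connect_in S s p x : path e s p -> {subset s :: p <= S} ->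
  x \in s :: p -> connect (restr e S) s x.
Proof.
elim: p s => [|a p IH] s /=; first by move=> _ _; rewrite inE => /eqP->; apply: connect0.
move=> /andP[esa pa] pS; rewrite inE => /predU1P[-> // | xap].
apply: connect_trans (IH a pa _ xap); last by move=> u up; apply: pS; rewrite inE up orbT.
by apply: connect1; rewrite /restr esa !pS ?inE ?eqxx ?orbT.
Qed.

Lemma path_connected s p : path e s p -> connected_in e [set u in s :: p].
Proof.
move=> sp; apply: (connected_in_root (r := s)) => x; rewrite in_set => xsp.
by apply: (path_connect_in sp _ xsp) => u; rewrite in_set.
Qed.

Lemma segment_connected w q p t : sorted e w -> w = q ++ p ++ t ->
  connected_in e [set u in p].
Proof.
move=> sw wE; subst w; case: p => [|a p] in sw *.
  by apply/forall_inP => u; rewrite inE.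
by move: sw; rewrite sorted_cat_cons cat_path => /and3P[_ /path_connected].
Qed.

End InducedConnectivity.

Section Blocks.
Variables (T : finType) (e : rel T).
Hypotheses (e_sym : symmetric e) (e_irr : irreflexive e).
Implicit Types (A B : {set T}) (u v w x y z : T).

Lemma biconnected_card B : biconnected e B -> 1 < #|B|.
Proof. by case/and3P. Qed.

Lemma biconnected_connected B : biconnected e B -> connected_in e B.
Proof. by case/and3P. Qed.

Lemma biconnected_del B w : biconnected e B -> connected_in e (B :\ w).
Proof.
case/and3P=> _ cB /forall_inP cBw; have [/cBw // | wB] := boolP (w \in B).
suff -> : B :\ w = B by [].
by apply/setP => x; rewrite !inE; case: eqP => // ->; rewrite (negbTE wB).
Qed.

Lemma biconnectedU A B x y : biconnected e A -> biconnected e B -> x != y ->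
  x \in A -> x \in B -> y \in A -> y \in B -> biconnected e (A :|: B).
Proof.
move=> bA bB xy xA xB yA yB; apply/and3P; split.
- exact: leq_trans (biconnected_card bA) (subset_leq_card (subsetUl A B)).
- exact: (connected_inU e_sym (biconnected_connected bA) (biconnected_connected bB) xA xB).
apply/forall_inP => w _; rewrite setDUl.
have [-> | wx] := eqVneq w x.
  by apply: (connected_inU e_sym (r := y)); rewrite ?biconnected_del // !inE eq_sym xy.
by apply: (connected_inU e_sym (r := x)); rewrite ?biconnected_del // !inE eq_sym wx.
Qed.

Lemma block_biconnected B : is_block e B -> biconnected e B.
Proof. by case/andP. Qed.

Lemma block_maximal B B' : is_block e B -> B \proper B' -> ~~ biconnected e B'.
Proof. by case/andP=> _ /forallP/(_ B')/implyP. Qed.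

Lemma block_unique A B x y : is_block e A -> is_block e B -> x != y ->
  x \in A -> x \in B -> y \in A -> y \in B -> A = B.
Proof.
move=> bA bB xy xA xB yA yB.
have bAB := biconnectedU (block_biconnected bA) (block_biconnected bB) xy xA xB yA yB.
have absorb C : is_block e C -> C \subset A :|: B -> A :|: B = C.
  move=> bC sC; apply/eqP; rewrite eq_sym eqEproper sC /=.
  by apply: contraNN (block_maximal bC) _; rewrite bAB.
by rewrite -(absorb A bA (subsetUl A B)) (absorb B bB (subsetUr A B)).
Qed.

(* Every edge lies in a block: grow the edge to a largest biconnected superset. *)
Lemma edge_in_block x y : e x y -> exists2 B, is_block e B & (x \in B) && (y \in B).
Proof.
move=> exy; have xy : x != y by apply: contraTneq exy => ->; rewrite e_irr.
pose B0 := [set x; y].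
have complB0 A : A \subset B0 -> forall a b, a \in A -> b \in A -> a = b \/ e a b.
  move=> /subsetP sA a b /sA + /sA; rewrite !inE.
  case/orP=> /eqP-> /orP[] /eqP->; by [left | right; rewrite // e_sym].
have bB0 : biconnected e B0.
  apply/and3P; split; first by rewrite cards2 xy.
    exact/complete_connected/complB0.
  by apply/forall_inP => w _; apply/complete_connected/complB0/subD1set.
have B0_ok : biconnected e B0 && (B0 \subset B0) by rewrite bB0 subxx.
have [B /andP[bB sB0B] maxB] :=
  @arg_maxnP _ B0 (fun B => biconnected e B && (B0 \subset B)) (fun B => #|B|) B0_ok.
exists B; last by rewrite !(subsetP sB0B) // !inE eqxx ?orbT.
rewrite /is_block bB; apply/forallP => B'; apply/implyP => pBB'; apply/negP => bB'.
have := maxB B'; rewrite bB' (subset_trans sB0B (proper_sub pBB')) => /(_ isT).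
by apply/negP; rewrite -ltnNge proper_card.
Qed.

(* An ear of a biconnected set [B] is a walk [y :: I ++ [:: z]] without repeated
   interior vertices, whose ends [y != z] lie in [B] and whose interior [I] avoids
   [B]. *)
Section Ear.
Variables (B : {set T}) (y z : T) (I : seq T).
Hypotheses (bicB : biconnected e B) (yB : y \in B) (zB : z \in B) (yz : y != z).
Hypotheses (I_out : all (fun u => u \notin B) I) (uniqI : uniq I).
Hypothesis ear : path e y (rcons I z).

Local Notation B' := (B :|: [set u in I]).

Let walk : sorted e (y :: rcons I z). Proof. exact: ear. Qed.

Let B_notin_I u : u \in B -> u \notin I.
Proof. by apply: contraL => /(allP I_out). Qed.

Let piece_sub (p : seq T) w : (forall u, u \in p -> (u \in B) || (u \in I)) -> w \notin p ->
  [set u in p] \subset B' :\ w.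
Proof.
move=> pBI wp; apply/subsetP => u; rewrite in_set => up.
by rewrite in_setD1 !inE pBI // andbT; apply: contraNneq wp => <-.
Qed.

Let in_walk u : u \in y :: rcons I z -> (u \in B) || (u \in I).
Proof. by rewrite inE mem_rcons inE => /or3P[/eqP-> | /eqP-> | ->]; rewrite ?yB ?zB ?orbT. Qed.

Lemma ear_connected : connected_in e B'.
Proof.
have walk_conn := segment_connected e_sym walk (q := [::]) (t := [::]) (esym (cats0 _)).
have walk_sub : [set u in y :: rcons I z] \subset B'.
  by apply/subsetP => u; rewrite in_set => /in_walk; rewrite !inE.
apply: (connected_in_root e_sym (r := y)) => x; rewrite !inE => /orP[xB | xI].
  exact: connected_in_sub (biconnected_connected bicB) (subsetUl _ _) yB xB.
apply: connected_in_sub walk_conn walk_sub _ _;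
  by rewrite in_set inE ?mem_rcons ?inE ?eqxx ?xI ?orbT.
Qed.

(* Deleting a vertex [w] of [B]: [B :\ w] stays connected and the ear hangs
   from whichever of its ends differs from [w]. *)
Lemma ear_del_block w : w \in B -> connected_in e (B' :\ w).
Proof.
move=> wB; have sBD : B :\ w \subset B' :\ w by apply: setSD; apply: subsetUl.
have cBw := biconnected_del w bicB.
have [w_eq_y | wy] := eqVneq w y.
- subst w; have seg_conn : connected_in e [set u in rcons I z].
    exact: (segment_connected e_sym walk (q := [:: y]) (t := [::]) (esym (cats0 _))).
  have seg_sub : [set u in rcons I z] \subset B' :\ y.
    apply: piece_sub => [u uIz | ]; first by apply: in_walk; rewrite inE uIz orbT.
    by rewrite mem_rcons inE negb_or yz B_notin_I.
  have zBy : z \in B :\ y by rewrite in_setD1 eq_sym yz.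
  apply: (connected_in_root e_sym (r := z)) => x.
  rewrite in_setD1 !inE => /andP[xy /orP[xB | xI]].
    by apply: connected_in_sub cBw sBD zBy _; rewrite in_setD1 xy.
  by apply: connected_in_sub seg_conn seg_sub _ _; rewrite in_set mem_rcons inE ?eqxx ?xI ?orbT.
- have seg_conn : connected_in e [set u in y :: I].
    by apply: (segment_connected e_sym walk (q := [::]) (t := [:: z])); rewrite /= cats1.
  have seg_sub : [set u in y :: I] \subset B' :\ w.
    apply: piece_sub => [u | ]; last by rewrite inE negb_or B_notin_I // andbT.
    by rewrite inE => /predU1P[-> | ->]; rewrite ?yB ?orbT.
  have yBw : y \in B :\ w by rewrite in_setD1 eq_sym wy.
  apply: (connected_in_root e_sym (r := y)) => x.
  rewrite in_setD1 !inE => /andP[xw /orP[xB | xI]].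
    by apply: connected_in_sub cBw sBD yBw _; rewrite in_setD1 xw.
  by apply: connected_in_sub seg_conn seg_sub _ _; rewrite in_set inE ?eqxx ?xI ?orbT.
Qed.

(* Deleting a vertex [w] of the ear cuts it into two segments, hanging from
   [y] and from [z] respectively; [B] itself stays connected and joins them. *)
Lemma ear_del_ear w : w \in I -> connected_in e (B' :\ w).
Proof.
move=> wI; have wB : w \notin B by apply: (allP I_out).
have sBD : B \subset B' :\ w.
  by apply/subsetP => u uB; rewrite in_setD1 !inE uB andbT; apply: contraNneq wB => <-.
have cB := biconnected_connected bicB.
have hasw : has (pred1 w) I by rewrite has_pred1.
have [I1 [w' [I2 [defI /eqP ew' _]]]] := split_first hasw.
subst w'; have : uniq (I1 ++ w :: I2) by rewrite -defI.
rewrite cat_uniq /= => /and3P[_ /norP[wI1 _] /andP[wI2 _]].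
have inI u : u \in I1 ++ I2 -> u \in I.
  by rewrite defI !mem_cat inE => /orP[] ->; rewrite ?orbT.
have seg1 : connected_in e [set u in y :: I1].
  apply: (segment_connected e_sym walk (q := [::]) (t := w :: rcons I2 z)).
  by rewrite defI rcons_cat.
have seg1_sub : [set u in y :: I1] \subset B' :\ w.
  apply: piece_sub => [u | ].
    by rewrite inE => /predU1P[-> | uI1]; rewrite ?yB // inI ?mem_cat ?uI1 ?orbT.
  by rewrite inE negb_or wI1 andbT; apply: contraNneq wB => ->.
have seg2 : connected_in e [set u in rcons I2 z].
  apply: (segment_connected e_sym walk (q := y :: rcons I1 w) (t := [::])).
  by rewrite defI cats0 rcons_cat /= cat_rcons.
have seg2_sub : [set u in rcons I2 z] \subset B' :\ w.
  apply: piece_sub => [u | ].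
    by rewrite mem_rcons inE => /predU1P[-> | uI2]; rewrite ?zB // inI ?mem_cat ?uI2 ?orbT.
  by rewrite mem_rcons inE negb_or wI2 andbT; apply: contraNneq wB => ->.
apply: (connected_in_root e_sym (r := y)) => x.
rewrite in_setD1 !inE => /andP[xw /orP[xB | xI]].
  exact: connected_in_sub cB sBD yB xB.
have : x \in I1 ++ w :: I2 by rewrite -defI.
rewrite mem_cat inE (negbTE xw) /= => /orP[xI1 | xI2].
  by apply: connected_in_sub seg1 seg1_sub _ _; rewrite in_set inE ?eqxx ?xI1 ?orbT.
apply: connect_trans (connected_in_sub cB sBD yB zB) _.
by apply: connected_in_sub seg2 seg2_sub _ _; rewrite in_set mem_rcons inE ?eqxx ?xI2 ?orbT.
Qed.

Lemma ear_biconnected : biconnected e B'.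
Proof.
apply/and3P; split.
- exact: leq_trans (biconnected_card bicB) (subset_leq_card (subsetUl _ _)).
- exact: ear_connected.
apply/forall_inP => w; rewrite !inE => /orP[]; [exact: ear_del_block | exact: ear_del_ear].
Qed.

End Ear.

(* A block has no ear: a walk leaving a block [B] at [y] and first returning
   at [z] must return where it left. *)
Lemma no_ear B y z a q : is_block e B -> y \in B -> z \in B -> y != z ->
  all (fun u => u \notin B) (a :: q) -> path e y (a :: rcons q z) -> False.
Proof.
move=> bB yB zB yz /andP[aB /allP qB] /andP[eya paz].
case: (shortenP paz) (last_rcons a q z) => p pp up sub.
case/lastP: p pp up sub => [_ _ _ /= az | r z' pp up sub]; first by rewrite az zB in aB.
rewrite last_rcons => ez'; subst z'.
move: up; rewrite -rcons_cons rcons_uniq => /andP[zar uar].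
have r_out : all (fun u => u \notin B) (a :: r).
  apply/andP; split=> //; apply/allP => u ur.
  have := sub u; rewrite !mem_rcons !inE ur orbT => /(_ isT) /predU1P[uz | /qB //].
  by rewrite -uz inE ur orbT in zar.
have ear_ar : path e y (rcons (a :: r) z) by rewrite rcons_cons /= eya.
have bic := ear_biconnected (block_biconnected bB) yB zB yz r_out uar ear_ar.
have grow : B \proper B :|: [set u in a :: r].
  by apply/properP; split; [exact: subsetUl | exists a; rewrite // !inE eqxx orbT].
by move/negP: (block_maximal bB grow).
Qed.

Lemma step_edge y p st : path e y p -> st \in steps y p -> e st.1 st.2.
Proof.
elim: p y => [//|a p IH] y /andP[eya pa]; rewrite steps_cons inE.
by case/predU1P=> [-> // | /IH]; apply.
Qed.

(* A walk from a vertex [y] of a block [B] to another vertex [v] of [B] enters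
   [v] from inside [B]: otherwise, the part of the walk since it last left [B]
   would be an ear of [B]. *)
Lemma block_entered B v y p : is_block e B -> v \in B -> y \in B -> y != v ->
  path e y p -> v \in p -> exists2 u, u \in B & (u, v) \in steps y p.
Proof.
move=> bB vB yB yv pyp.
rewrite -has_pred1 => /split_first[p1 [v' [p2 [defp /eqP ev' p1v]]]].
subst v' p; have [uB | uB] := boolP (last y p1 \in B).
  by exists (last y p1); rewrite // steps_cat steps_cons mem_cat inE eqxx orbT.
have walk_to_v : sorted e (rcons (y :: p1) v).
  by move: pyp; rewrite cat_path /= => /and3P[py1 ev _]; rewrite /= rcons_path py1.
have hasB : has (mem B) (y :: p1) by rewrite /= yB.
have [q [z [[|a r] [defy zB rB]]]] := split_last hasB.
  have := congr1 (last y) defy; rewrite last_cat /= => last_z.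
  by rewrite last_z in uB; case/negP: uB; exact: zB.
have zv : z != v.
  have zp1 : z \in y :: p1 by rewrite defy mem_cat mem_head orbT.
  apply: contraTneq zp1 => ->; rewrite inE eq_sym (negbTE yv) /=.
  by apply/negP => /(allP p1v); rewrite /= eqxx.
move: walk_to_v; rewrite defy rcons_cat /= sorted_cat_cons => /andP[_ pz].
case: (no_ear bB zB vB zv _ pz).
by apply/allP => u /(allP rB).
Qed.

Lemma cycle_enters_block B v c : is_block e B -> v \in B -> cycle e c ->
  (forall u, u \in c) -> exists2 u, u \in B & (u, v) \in arcs c.
Proof.
move=> bB vB cc cover.
have [x [x' [xB x'B xx']]] := card_gt1P (biconnected_card (block_biconnected bB)).
have [y yB yv] : exists2 y, y \in B & y != v.
  by have [xv | xv] := eqVneq x v; [exists x'; rewrite // -xv eq_sym | exists x].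
have [i c' rot_c] := rot_to (cover y).
have ycyc : cycle e (y :: c') by rewrite -rot_c rot_cycle.
have vc' : v \in rcons c' y.
  have : v \in y :: c' by rewrite -rot_c mem_rot.
  by rewrite inE eq_sym (negbTE yv) mem_rcons inE /= => ->; rewrite orbT.
have [u uB uv] := block_entered bB vB yB yv ycyc vc'.
by exists u; rewrite // -(mem_rot i) -arcs_rot rot_c arcs_cons.
Qed.

Lemma arc_edge c st : cycle e c -> st \in arcs c -> e st.1 st.2.
Proof. by case: c => [//|a s] cc; rewrite arcs_cons; apply: step_edge. Qed.

Definition incidences : {set {set T} * T} := [set bv | is_block e bv.1 & bv.2 \in bv.1].

(* Each incidence (B, v) is witnessed by an arc (u, v) of a closed walk through
   all vertices, with u in B; as an arc lies in a single block, the walk has at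
   least as many arcs as there are incidences. *)
Lemma incidences_le_walk c : cycle e c -> (forall v, v \in c) -> #|incidences| <= size c.
Proof.
move=> cc cover.
pose block_of (st : T * T) :=
  odflt set0 [pick B | is_block e B && (st.1 \in B) && (st.2 \in B)].
have inc_arcs : incidences \subset [set (block_of st, st.2) | st in arcs c].
  apply/subsetP => -[B v]; rewrite inE /= => /andP[bB vB].
  have [u uB uv] := cycle_enters_block bB vB cc cover.
  apply/imsetP; exists (u, v) => //; congr (_, _); rewrite /block_of /=.
  case: pickP => [B' /andP[/andP[bB' uB'] vB'] | /(_ B)]; last by rewrite bB uB vB.
  have u_neq_v : u != v by apply: contraTneq (arc_edge cc uv) => /= ->; rewrite e_irr.
  exact: block_unique bB bB' u_neq_v uB uB' vB vB'.
rewrite -(size_arcs c); apply: leq_trans (card_size (arcs c)).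
exact: leq_trans (subset_leq_card inc_arcs) (leq_imset_card _ _).
Qed.

(* Given heights [h] such that every vertex other than a root [x] has a lower
   neighbour, the incidences (B, v) with [v] lowest in [B] number at least one
   per block, and the others at least one per vertex [v != x]: take a block
   containing an edge into [v] from below. *)
Lemma incidences_ge x (h : T -> nat) :
  (forall v, v != x -> exists2 u, e u v & h u < h v) ->
  #|T|.-1 + nblocks e <= #|incidences|.
Proof.
move=> descent; pose lowest := [set bv : {set T} * T | [forall u in bv.1, h bv.2 <= h u]].
rewrite -(cardsID lowest incidences) addnC leq_add //.
- apply: leq_trans (leq_imset_card fst _); apply/subset_leq_card/subsetP => B.
  rewrite inE => bB.
  have [v0 [_ [v0B _ _]]] := card_gt1P (biconnected_card (block_biconnected bB)).
  have [v vB vmin] := @arg_minnP _ v0 (mem B) h v0B.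
  apply/imsetP; exists (B, v); rewrite // !inE bB /= [v \in B]vB.
  by apply/forall_inP => u /vmin.
- rewrite -(cardsC1 x); apply: leq_trans (leq_imset_card snd _).
  apply/subset_leq_card/subsetP => v; rewrite !inE => vx.
  have [u euv huv] := descent v vx; have [B bB /andP[uB vB]] := edge_in_block euv.
  apply/imsetP; exists (B, v); rewrite // !inE bB vB /=.
  by rewrite andbT; apply/forall_inP => /(_ u uB); rewrite leqNgt huv.
Qed.

End Blocks.

Section Distances.
Variables (T : finType) (e : rel T).
Implicit Types (u v x y : T) (p w : seq T).

Lemma dist_le_walk y p : path e y p -> dist e y (last y p) <= size p.
Proof.
move=> yp; have [small | large] := ltnP (size p) #|T|; last first.
  by apply: leq_trans (find_size _ _) _; rewrite size_iota.
rewrite leqNgt; apply/negP => lt_p.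
have := before_find 0 lt_p; rewrite nth_iota // add0n => /existsP; apply.
by exists (in_tuple p); rewrite /= yp eqxx.
Qed.

Lemma shortest_walk u v : connect e u v ->
  exists w, [/\ path e u w, last u w = v & size w = dist e u v].
Proof.
move=> /connectP[p pp ->]; case: (shortenP pp) => p' pp' up' _.
have small : size p' < #|T| by have := max_card (mem (u :: p')); rewrite (card_uniqP up').
pose P m := [exists t : m.-tuple T, path e u t && (last u t == last u p')].
have hasP : has P (iota 0 #|T|).
  apply/hasP; exists (size p'); first by rewrite mem_iota.
  by apply/existsP; exists (in_tuple p'); rewrite /= pp' eqxx.
have find_small : find P (iota 0 #|T|) < #|T| by rewrite -[X in _ < X](size_iota 0) -has_find.
have := nth_find 0 hasP; rewrite nth_iota // add0n.
by case/existsP => t /andP[pt /eqP lt]; exists t; rewrite size_tuple.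
Qed.

(* Each vertex [v != x] has a neighbour closer to [x]: its predecessor on a
   shortest walk from [x]. *)
Lemma dist_descent x v : connect e x v -> v != x ->
  exists2 u, e u v & dist e x u < dist e x v.
Proof.
move=> xv vx; have [w [pw lw sw]] := shortest_walk xv.
case/lastP: w pw lw sw => [_ /= xv' | p v' pw]; first by rewrite xv' eqxx in vx.
rewrite last_rcons => ev'; subst v'; rewrite size_rcons => sw.
move: pw; rewrite rcons_path => /andP[pp ev]; exists (last x p) => //.
by rewrite -sw ltnS dist_le_walk.
Qed.

Hypothesis e_conn : forall u v, connect e u v.

Lemma walk_through y p : exists w, [/\ path e y w, last y w = last y p,
  {subset p <= y :: w} & size w = \sum_(st <- steps y p) dist e st.1 st.2].
Proof.
elim: p y => [|a p IH] y; first by exists [::]; rewrite big_nil.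
have [w1 [pw1 lw1 sw1]] := shortest_walk (e_conn y a).
have [w2 [pw2 lw2 sub2 sw2]] := IH a.
have aw : a \in y :: w1 ++ w2 by rewrite -lw1 -cat_cons mem_cat mem_last.
exists (w1 ++ w2); split.
- by rewrite cat_path pw1 lw1.
- by rewrite last_cat lw1.
- move=> u; rewrite inE => /predU1P[-> // | /sub2].
  by rewrite inE => /predU1P[-> // | uw2]; rewrite inE mem_cat uw2 !orbT.
- by rewrite size_cat sw1 sw2 steps_cons big_cons.
Qed.

Lemma closed_walk_cycle x w : path e x w -> last x w = x -> cycle e (belast x w).
Proof. by case: w => [//| a w] /= pxw lw; rewrite -{2}lw -lastI. Qed.

Lemma tour_closed_walk t : uniq t -> size t = #|T| -> 1 < #|T| ->
  exists c, [/\ cycle e c, forall v, v \in c & size c = tour_cost e t].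
Proof.
move=> ut st n_gt1.
have cover_t v : v \in t.
  have le_size : size (enum T) <= size t by rewrite st cardE.
  have [_ eq_t] := uniq_min_size ut (fun u _ => mem_enum T u) le_size.
  by rewrite eq_t mem_enum.
case: t ut st cover_t => [|x [|y s]] ut st cover_t; try by rewrite -st in n_gt1.
have [w [pw lw sub sw]] := walk_through x (rcons (y :: s) x).
rewrite last_rcons in lw.
have in_xw v : v \in x :: w.
  have := cover_t v; rewrite inE => /predU1P[-> | vs]; first exact: mem_head.
  by apply: sub; rewrite mem_rcons inE vs orbT.
exists (belast x w); split.
- exact: closed_walk_cycle.
- case: w {pw sub sw} lw in_xw => [_ | a w /= lw] in_xw v.
    by have := in_xw y; rewrite !inE => /eqP yx; move: ut; rewrite /= yx inE eqxx.
  by have := in_xw v; rewrite (lastI a w) lw -rcons_cons mem_rcons inE orbA orbb.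
- by rewrite size_belast sw /tour_cost -arcs_cons.
Qed.

End Distances.

(* Every tour costs at least n + k - 1: its closed walk has at least as many
   arcs as there are incidences, and there are at least n - 1 + k of those,
   using distances from any root vertex as heights. *)
Lemma tour_cost_lb (T : finType) (e : rel T) (e_sym : symmetric e) (e_irr : irreflexive e)
  (e_conn : forall x y : T, connect e x y) (n_gt1 : 1 < #|T|) (t : seq T) :
  uniq t -> size t = #|T| -> #|T| + nblocks e - 1 <= tour_cost e t.
Proof.
move=> ut st; have [c [cc cover <-]] := tour_closed_walk e_conn ut st n_gt1.
have [x _] := card_gt0P (ltnW n_gt1).
have many_incidences := incidences_ge e_sym e_irr (fun v => dist_descent (e_conn x v)).
rewrite -(prednK (ltnW n_gt1)) addSn subn1 /=.
exact: leq_trans many_incidences (incidences_le_walk e_sym e_irr cc cover).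
Qed.

Theorem mainTheorem8 (T : finType) (e : rel T)
  (e_sym : symmetric e) (e_irr : irreflexive e)
  (e_conn : forall x y : T, connect e x y)
  (n_ge2 : 2 <= #|T|) :
  #|T| + nblocks e - 1 <= tsp_cost e.
Proof.
rewrite /tsp_cost; apply: (big_ind (fun m => #|T| + nblocks e - 1 <= m)).
- exact: tour_cost_lb (enum_uniq T) (esym (cardE T)).
- by move=> a b ha hb; rewrite leq_min ha hb.
- by move=> t ut; apply: tour_cost_lb ut (size_tuple t).
Qed.
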